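(* Let $T$ be a perfect binary tree with nonnegative node weights $(x_v)$, let $1\le k\le K$ be integers, $\epsilon>0$, and fix a level $\ell$ of $T$ containing at least $M=\lceil(1+\epsilon)K/\epsilon\rceil$ nodes. For each node $v$ let $T_v$ be the set of descendants of $v$ (including $v$) and $u_v=\sum_{w\in T_v}x_w$. Let $u$ be the $M$-th largest value among $\{u_v: v \text{ at level }\ell\}$ (with multiplicity), let $D=\{v \text{ at level } \ell: u_v<u\}$ and $Z=\bigcup_{v\in D}T_v$. Let $\mathrm{OPT}=\min_{\Omega\in\mathbb{T}_k}\sum_{w\notin\Omega}x_w$ and $\check{\mathrm{OPT}}=\min\{\sum_{w\notin\Omega}x_w:\Omega\in\mathbb{T}_k,\ \Omega\cap Z=\emptyset\}$. Then $\check{\mathrm{OPT}}\le(1+\epsilon)\mathrm{OPT}$.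
   Context: $\mathbb{T}_k$ denotes the family of node sets $\Omega\subseteq T$ that contain the root, are closed under taking parents, and satisfy $|\Omega|\le k$. The level of a node is counted from the leaves (leaves are at level 1); all nodes at a given level have the same number of descendants. *)

From HB Require Import structures.
From mathcomp Require Import all_boot all_order all_algebra.
Set Implicit Arguments. Unset Strict Implicit. Unset Printing Implicit Defensive.
Import Order.TTheory GRing.Theory Num.Theory.
Local Open Scope ring_scope.

(* A node is encoded by the path from
   the root, written as a list of bools with the LAST step FIRST: the root
   is [::], the children of [s] are [true :: s] and [false :: s], hence the
   parent of [b :: s] is [s], and [w] is a descendant of [v] iff [val v] is
   a suffix of [val w]. *)
Fixpoint words (n : nat) : seq (seq bool) :=
  if n is n'.+1 then [seq b :: w | b <- [:: true; false], w <- words n']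
  else [:: [::]].

Definition tree_nodes (d : nat) : seq (seq bool) :=
  flatten [seq words i | i <- iota 0 d].

Definition node (d : nat) := seq_sub (tree_nodes d).

(* level counted from the leaves: leaves (depth d-1) are at level 1 *)
Definition level d (v : node d) : nat := (d - size (val v))%N.

Definition is_root d (v : node d) : bool := val v == [::].

Definition desc d (v w : node d) : bool := suffix (val v) (val w).

Definition is_parent d (p c : node d) : bool := [exists b : bool, val c == b :: val p].

Definition inTk d (k : nat) (Om : {set node d}) : bool :=
  [&& [forall r, is_root r ==> (r \in Om)],
      [forall c, forall p, (is_parent p c && (c \in Om)) ==> (p \in Om)]
    & (#|Om| <= k)%N].

Section Weights.
Variables (R : realFieldType) (d : nat) (x : node d -> R).

Definition subtree_weight (v : node d) : R := \sum_(w | desc v w) x w.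

Definition cost (Om : {set node d}) : R := \sum_(w | w \notin Om) x w.

Definition total_weight : R := \sum_w x w.

(* minimum of cost over T_k; the neutral element total_weight is >= every
   cost (weights are nonnegative) so this is the true minimum whenever the
   family is nonempty *)
Definition OPT (k : nat) : R :=
  \big[Num.min/total_weight]_(Om : {set node d} | inTk k Om) cost Om.

Definition OPTcheck (k : nat) (Z : {set node d}) : R :=
  \big[Num.min/total_weight]_(Om : {set node d} | inTk k Om && [disjoint Om & Z]) cost Om.

Definition mth_largest_at_level (l m : nat) : R :=
  nth 0 (sort >=%R [seq subtree_weight v | v <- enum [set v | level v == l]]) m.-1.

Definition Dset (l m : nat) : {set node d} :=
  [set v | (level v == l) && (subtree_weight v < mth_largest_at_level l m)].

Definition Zset (l m : nat) : {set node d} :=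
  [set w | [exists v in Dset l m, desc v w]].

End Weights.

From HB Require Import structures.
From mathcomp Require Import all_boot all_order all_algebra zify lra.
Import Order.TTheory GRing.Theory Num.Theory.
Set Implicit Arguments. Unset Strict Implicit.
Local Open Scope ring_scope.

(* Fix Om in T_k and let u be the M-th largest subtree weight at level l.
   Removing Z from Om keeps it in T_k, since Z is closed under descendants and
   misses the root.  The extra cost is the weight of Om :&: Z, which lies in
   the subtrees of the at most k light nodes (u_v < u) of Om, so it is at most
   k u.  Conversely, at least M - k of the >= M heavy nodes (u_v >= u) are
   outside Om; their subtrees are disjoint and, Om being closed under parents,
   lie entirely outside Om, so cost Om >= (M - k) u.  The choice of M gives
   k <= eps (M - k), hence the extra cost is at most eps * cost Om. *)

Lemma count_enum_set (T : finType) (A : {pred T}) (P : pred T) :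
  count P (enum A) = #|[set v in A | P v]|.
Proof.
rewrite -size_filter cardE /enum_mem -filter_predI /=.
by apply/congr1/eq_filter => v; rewrite !inE andbC.
Qed.

Lemma count_ge_nth_sort disp (T : orderType disp) (x0 : T) (s : seq T) (m : nat) :
  (m < size s)%N -> (m < count (>= nth x0 (sort >=%O s) m)%O s)%N.
Proof.
move=> ms; rewrite -(count_sort >=%O); set t := sort _ s.
have t_sorted : sorted >=%O t by apply: sort_sorted => a b; apply: le_total.
have ge_trans : transitive (>=%O : rel T) by move=> a b c ba cb; exact: le_trans cb ba.
have sz : size (take m.+1 t) = m.+1 by rewrite size_takel // size_sort.
set u := nth x0 t m.
suff : all (>= u)%O (take m.+1 t).
  rewrite all_count sz => /eqP take_ge.
  by rewrite -(cat_take_drop m.+1 t) count_cat take_ge leq_addr.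
apply/(all_nthP x0) => i; rewrite sz => im; rewrite nth_take //=.
by apply: (sorted_leq_nth ge_trans (@lexx _ _) x0 t_sorted);
  rewrite ?inE ?size_sort // (leq_trans im).
Qed.

Lemma mem_words n (s : seq bool) : (s \in words n) = (size s == n).
Proof.
elim: n s => [|n IH] [|b t] //=; rewrite cats0 mem_cat.
  by apply/negbTE/negP; case/orP => /mapP [].
apply/orP/idP => [[] /mapP [w w_n [_ ->]] | t_n]; first by rewrite eqSS -IH.
  by rewrite eqSS -IH.
by rewrite eqSS -IH in t_n; case: b; [left | right]; exact: map_f.
Qed.

Lemma mem_tree_nodes d (s : seq bool) : (s \in tree_nodes d) = (size s < d)%N.
Proof.
apply/flatten_mapP/idP => [[i] | s_d].
  by rewrite mem_iota mem_words add0n => /andP [_ i_d] /eqP ->.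
by exists (size s); rewrite ?mem_iota ?mem_words.
Qed.

Lemma node_size d (v : node d) : (size (val v) < d)%N.
Proof. by rewrite -mem_tree_nodes; apply: ssvalP. Qed.

Lemma desc_child d (v p c : node d) : is_parent p c -> desc v p -> desc v c.
Proof.
move=> /existsP [b /eqP c_bp] /suffixP [q p_qv].
by apply/suffixP; exists (b :: q); rewrite c_bp p_qv.
Qed.

Lemma desc_same_level d (v v' w : node d) :
  level v = level v' -> desc v w -> desc v' w -> v = v'.
Proof.
rewrite /level /desc => lvl /suffixP [p w_pv] /suffixP [p' w_pv'].
have := node_size v; have := node_size v' => v'_d v_d.
have sz_p : size p = size p'.
  by have := congr1 size w_pv; rewrite w_pv' !size_cat; lia.
apply: val_inj; rewrite -(drop_size_cat (val v) (erefl (size p))) -w_pv w_pv'.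
by rewrite (drop_size_cat _ (esym sz_p)).
Qed.

Lemma card_level_top d : (#|[set v : node d | level v == d]| <= 1)%N.
Proof.
apply/card_le1_eqP => v w; rewrite !inE /level => /eqP v_d /eqP w_d.
have sz0 (u : node d) : (d - size (val u))%N = d -> val u = [::].
  by move=> u_d; apply: size0nil; have := node_size u; lia.
by apply: val_inj; rewrite (sz0 v v_d) (sz0 w w_d).
Qed.

Definition parent_closed d (Om : {set node d}) :=
  forall p c : node d, is_parent p c -> c \in Om -> p \in Om.

Lemma inTk_parent_closed d k (Om : {set node d}) : inTk k Om -> parent_closed Om.
Proof.
case/and3P => _ /forallP par _ p c pc cOm.
by have /forallP/(_ p)/implyP := par c; apply; rewrite pc.
Qed.

Lemma parent_closed_desc d (Om : {set node d}) (v w : node d) :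
  parent_closed Om -> w \in Om -> desc v w -> v \in Om.
Proof.
move=> Om_closed + /suffixP [p]; elim: p w => [|b p IH] w wOm w_pv.
  by have -> : v = w by apply: val_inj; rewrite w_pv.
have pv_node : p ++ val v \in tree_nodes d.
  by rewrite mem_tree_nodes; have := node_size w; rewrite w_pv /=; lia.
apply: (IH (SeqSub pv_node)) => //; apply: (Om_closed _ w) => //.
by apply/existsP; exists b; rewrite w_pv.
Qed.

Lemma inTk_setD d k (Om Z : {set node d}) :
  (forall p c, is_parent p c -> p \in Z -> c \in Z) ->
  (forall r, is_root r -> r \notin Z) ->
  inTk k Om -> inTk k (Om :\: Z).
Proof.
move=> Z_closed root_Z Om_k; have Om_closed := inTk_parent_closed Om_k.
case/and3P: Om_k => /forallP Om_root _ Om_card; apply/and3P; split.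
- apply/forallP => r; apply/implyP => r_root.
  by rewrite in_setD root_Z ?(implyP (Om_root r)).
- apply/forallP => c; apply/forallP => p; apply/implyP => /andP [pc].
  rewrite !in_setD => /andP [cZ cOm]; rewrite (Om_closed p c) // andbT.
  by apply: contra cZ; apply: Z_closed.
- by apply: leq_trans Om_card; apply/subset_leq_card/subsetDl.
Qed.

Lemma light_charge_le (R : realFieldType) (u eps : R) (k M nD nH : nat) :
  0 <= u -> 0 < eps -> (1 + eps) * k%:R <= eps * M%:R ->
  (nD <= k)%N -> (M <= nH + k)%N -> u *+ nD <= eps * (u *+ nH).
Proof.
rewrite -[u *+ nD]mulr_natr -[u *+ nH]mulr_natr => u_ge0 eps_gt0 kM.
rewrite -!(ler_nat R) natrD => nD_k M_nH.
have : u * nD%:R <= u * (eps * (M%:R - k%:R)) by apply: ler_wpM2l => //; lra.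
move/le_trans; apply; rewrite mulrCA ler_pM2l //.
by apply: ler_wpM2l => //; lra.
Qed.

Section Weights.
Variables (R : realFieldType) (d : nat) (x : node d -> R).
Hypothesis x_ge0 : forall v, 0 <= x v.

Lemma subtree_weight_ge0 v : 0 <= subtree_weight x v.
Proof. by apply: sumr_ge0 => w _; apply: x_ge0. Qed.

Lemma ler_sum_subset (A B : {pred node d}) :
  {subset A <= B} -> \sum_(w in A) x w <= \sum_(w in B) x w.
Proof.
move=> AB; rewrite [leRHS](bigID (mem A)) /=.
have -> : \sum_(w in B | w \in A) x w = \sum_(w in A) x w.
  by apply: eq_bigl => w; rewrite andbC; apply: andb_idr => /AB.
by rewrite lerDl sumr_ge0.
Qed.

Lemma cost_setD (Om Z : {set node d}) :
  cost x (Om :\: Z) = cost x Om + \sum_(w in Om :&: Z) x w.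
Proof.
rewrite /cost (bigID (mem Om)) addrC /=; congr (_ + _); apply: eq_bigl => w;
  by rewrite in_setD ?in_setI; case: (w \in Om); case: (w \in Z).
Qed.

Lemma sum_subtree_weight_level (A : {set node d}) :
  {in A &, forall v v', level v = level v'} ->
  \sum_(v in A) subtree_weight x v = \sum_(w | [exists v in A, desc v w]) x w.
Proof.
move=> A_level; rewrite /subtree_weight (exchange_big_dep predT) //= [RHS]big_mkcond.
apply: eq_bigr => w _; case: ifPn => [/existsP [v /andP [vA vw]] | no_anc].
  rewrite (big_pred1 v) // => v'; apply/andP/eqP => [[v'A v'w] | ->]; last by [].
  exact: desc_same_level (A_level _ _ v'A vA) v'w vw.
by rewrite big_pred0 // => v; apply: contraNF no_anc => anc; apply/existsP; exists v.
Qed.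

Lemma Zset_child l M (p c : node d) :
  is_parent p c -> p \in Zset x l M -> c \in Zset x l M.
Proof.
move=> pc; rewrite !inE => /existsP [v /andP [vD vp]].
by apply/existsP; exists v; rewrite vD (desc_child pc vp).
Qed.

Lemma root_notin_Zset l M (r : node d) : (l < d)%N -> is_root r -> r \notin Zset x l M.
Proof.
move=> l_d /eqP r_nil; rewrite inE; apply/existsP => -[v /andP [+ vr]].
move: vr; rewrite inE /desc r_nil suffixs0 => /eqP v_nil.
by rewrite /level v_nil subn0 => /andP [/eqP l_eq _]; rewrite l_eq ltnn in l_d.
Qed.

(* No range condition on M: out of range, [nth] returns the default 0. *)
Lemma mth_largest_at_level_ge0 l M : 0 <= mth_largest_at_level x l M.
Proof.
rewrite /mth_largest_at_level; set s := sort _ _.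
case: (ltnP M.-1 (size s)) => [M_s | s_M]; last by rewrite nth_default.
have : nth 0 s M.-1 \in s by apply: mem_nth.
by rewrite mem_sort => /mapP [v _ ->]; apply: subtree_weight_ge0.
Qed.

Lemma card_heavy_level l M : (0 < M)%N -> (M <= #|[set v : node d | level v == l]|)%N ->
  (M <= #|[set v | level v == l & (mth_largest_at_level x l M <= subtree_weight x v)%R]|)%N.
Proof.
move=> M_gt0 M_l; set L := [set v : node d | level v == l].
have := @count_ge_nth_sort _ _ 0 [seq subtree_weight x v | v <- enum L] M.-1.
rewrite size_map -cardE prednK // => /(_ M_l); rewrite count_map count_enum_set.
move=> /leq_trans; apply; apply/subset_leq_card/subsetP => v.
by rewrite !inE; exact: id.
Qed.

Lemma sum_Zset_le_light l M (Om : {set node d}) : parent_closed Om ->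
  \sum_(w in Om :&: Zset x l M) x w
    <= mth_largest_at_level x l M *+ #|Dset x l M :&: Om|.
Proof.
move=> Om_closed.
apply: (@le_trans _ _ (\sum_(v in Dset x l M :&: Om) subtree_weight x v)).
  rewrite sum_subtree_weight_level => [|v v']; last first.
    by rewrite !inE => /andP [/andP [/eqP -> _] _] /andP [/andP [/eqP -> _] _].
  apply: ler_sum_subset => w; rewrite !inE => /andP [wOm /existsP [v /andP [vD vw]]].
  by apply/existsP; exists v; rewrite inE vD (parent_closed_desc Om_closed wOm vw).
by rewrite -sumr_const; apply: ler_sum => v; rewrite !inE => /andP [/andP [_ /ltW]].
Qed.

Lemma heavy_le_cost l M (Om : {set node d}) : parent_closed Om ->
  mth_largest_at_level x l M *+
    #|[set v | level v == l & mth_largest_at_level x l M <= subtree_weight x v] :\: Om|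
  <= cost x Om.
Proof.
move=> Om_closed; set H := [set v | _ & _].
apply: (@le_trans _ _ (\sum_(v in H :\: Om) subtree_weight x v)).
  by rewrite -sumr_const; apply: ler_sum => v; rewrite !inE => /andP [_ /andP [_]].
rewrite sum_subtree_weight_level => [|v v']; last first.
  by rewrite !inE => /and3P [_ /eqP -> _] /and3P [_ /eqP -> _].
apply: ler_sum_subset => w /existsP [v /andP [vH vw]]; apply/negP => wOm.
by move: vH; rewrite inE (parent_closed_desc Om_closed wOm vw).
Qed.

Lemma OPTcheck_le_cost k l M (eps : R) (Om : {set node d}) :
  0 < eps -> (1 + eps) * k%:R <= eps * M%:R -> (l < d)%N -> (0 < M)%N ->
  (M <= #|[set v : node d | level v == l]|)%N -> inTk k Om ->
  OPTcheck x k (Zset x l M) <= (1 + eps) * cost x Om.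
Proof.
move=> eps_gt0 kM l_d M_gt0 M_l Om_k; have Om_closed := inTk_parent_closed Om_k.
have Om_card : (#|Om| <= k)%N by case/and3P: Om_k.
set u := mth_largest_at_level x l M; have u_ge0 : 0 <= u := mth_largest_at_level_ge0 l M.
set H := [set v | level v == l & u <= subtree_weight x v].
have check_le : OPTcheck x k (Zset x l M) <= cost x (Om :\: Zset x l M).
  apply: bigmin_le_cond; rewrite inTk_setD //; last 2 first.
  - exact: Zset_child.
  - by move=> r; apply: root_notin_Zset.
  by rewrite /= disjoint_subset; apply/subsetP => w; rewrite !inE => /andP [].
have light_le : (#|Dset x l M :&: Om| <= k)%N.
  exact/leq_trans/Om_card/subset_leq_card/subsetIr.
have heavy_ge : (M <= #|H :\: Om| + k)%N.
  rewrite cardsD; have := card_heavy_level M_gt0 M_l; rewrite -/u -/H.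
  have := leq_trans (subset_leq_card (subsetIr H Om)) Om_card; lia.
apply: le_trans check_le _; rewrite cost_setD mulrDl mul1r lerD2l.
apply: le_trans (sum_Zset_le_light l M Om_closed) _.
apply: le_trans (light_charge_le u_ge0 eps_gt0 kM light_le heavy_ge) _.
by rewrite ler_pM2l //; apply: heavy_le_cost.
Qed.

Lemma le_OPT k (y c : R) : y <= c * total_weight x ->
  (forall Om, inTk k Om -> y <= c * cost x Om) -> y <= c * OPT x k.
Proof.
move=> y_total y_cost; apply: (big_ind (fun z => y <= c * z)) => // a b ya yb.
by case: (leP a b).
Qed.

End Weights.

Theorem mainTheorem8 (R : archiRealFieldType) (d : nat) (x : node d -> R)
  (hx : forall v, 0 <= x v) (k K : nat) (hk1 : (1 <= k)%N) (hkK : (k <= K)%N)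
  (eps : R) (heps : 0 < eps) (M : nat)
  (hM : (M%:Z = Num.ceil ((1 + eps) * K%:R / eps))%R)
  (l : nat) (hl1 : (1 <= l)%N) (hld : (l <= d)%N)
  (hlM : (M <= #|[set v : node d | level v == l]|)%N) :
  OPTcheck x k (Zset x l M) <= (1 + eps) * OPT x k.
Proof.
have K_M : (1 + eps) * K%:R <= eps * M%:R.
  rewrite [eps * _]mulrC -ler_pdivrMr //; have := ceil_ge ((1 + eps) * K%:R / eps).
  by rewrite -hM.
have k_M : (1 + eps) * k%:R <= eps * M%:R.
  apply: le_trans K_M; rewrite ler_wpM2l ?ler_nat //; lra.
have M_gt1 : (1 < M)%N.
  rewrite -(ltr_nat R); have : 1 <= k%:R :> R by rewrite (ler_nat R 1).
  by nra.
have l_d : (l < d)%N.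
  rewrite ltn_neqAle hld andbT; apply: contraTneq hlM => ->.
  by rewrite -ltnNge (leq_ltn_trans (card_level_top d)).
apply: le_OPT => [|Om Om_k]; last by apply: OPTcheck_le_cost; rewrite // ltnW.
have : 0 <= total_weight x by apply: sumr_ge0 => v _.
have : OPTcheck x k (Zset x l M) <= total_weight x by apply: bigmin_le_id.
nra.
Qed.
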